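(* Let $\beta\in[0,1]$ and let $f\in C^{3+\beta}$ with $f'>0$ on $[A,B]$. Then there is a constant $C$ depending only on $f$ (and $[A,B]$) such that for all $\theta,x_1,x_2,x_3\in[A,B]$, $$ \left|\frac{f''(\theta)}{2f'(\theta)}+\frac{f'''(\theta)}{6f'(\theta)}(x_1+x_2+x_3-3\theta)-\left(\frac{f''(\theta)}{2f'(\theta)}\right)^2(x_2+x_3-2\theta)-\frac{f''(x_1)}{2f'(x_1)}-\frac{1}{6}Sf(x_1)(x_2+x_3-2x_1)\right|\le C\Delta_\theta^{1+\beta}, $$ where $\Delta_\theta=\max\{x_1,x_2,x_3,\theta\}-\min\{x_1,x_2,x_3,\theta\}$.
   Context: The Schwarzian derivative is $Sf=\frac{f'''}{f'}-\frac{3}{2}\left(\frac{f''}{f'}\right)^2$. $C^{3+\beta}$ means three times differentiable with $\beta$-Hölder third derivative. *)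

From Stdlib Require Import Reals.
From Coquelicot Require Import Coquelicot.
Open Scope R_scope.

(* x^a for x >= 0 with the usual convention 0^a = 0 for a > 0, 0^0 = 1
   (Stdlib's Rpower gives Rpower 0 a = 1, which is wrong at 0). *)
Definition rpow (x a : R) : R :=
  if Req_EM_T x 0 then (if Req_EM_T a 0 then 1 else 0) else Rpower x a.

Definition C3beta (f : R -> R) (A B beta : R) : Prop :=
  (forall x, A <= x <= B ->
     ex_derive_n f 1 x /\ ex_derive_n f 2 x /\ ex_derive_n f 3 x) /\
  exists K : R, forall x y, A <= x <= B -> A <= y <= B ->
     Rabs (Derive_n f 3 x - Derive_n f 3 y) <= K * rpow (Rabs (x - y)) beta.

Definition Schwarzian (f : R -> R) (x : R) : R :=
  Derive_n f 3 x / Derive_n f 1 x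
  - 3 / 2 * (Derive_n f 2 x / Derive_n f 1 x) ^ 2.

Definition Delta4 (th x1 x2 x3 : R) : R :=
  Rmax (Rmax x1 x2) (Rmax x3 th) - Rmin (Rmin x1 x2) (Rmin x3 th).

(* Write g = f''/(2f') and h = g' = f'''/(2f') - 2g^2, so that f'''/(6f') = h/3 + 2g^2/3
   and Sf = 2h - 2g^2.  The quantity to be estimated then splits into
   - the first-order Taylor remainder g(th) - g(x1) + h(th)(x1 - th),
   - (h(th) - h(x1))(x2 + x3 - 2x1)/3,
   - (g(x1)^2 - g(th)^2)(x2 + x3 - 2x1)/3.
   Since f''' is beta-Hoelder and f' is bounded away from 0, h is beta-Hoelder, which bounds
   the first two terms by a multiple of Delta^(1+beta); the last is O(Delta^2) because g is
   Lipschitz and bounded. *)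
From Stdlib Require Import Reals Lra Lia.
From Coquelicot Require Import Coquelicot.
Open Scope R_scope.

Lemma rpow_ge0 x a : 0 <= rpow x a.
Proof.
  unfold rpow. destruct (Req_EM_T x 0); [destruct (Req_EM_T a 0); lra|].
  left. apply exp_pos.
Qed.

Lemma rpow_Rpower x a : 0 < x -> rpow x a = Rpower x a.
Proof. intros Hx. unfold rpow. destruct (Req_EM_T x 0); [lra|reflexivity]. Qed.

Lemma rpow_le_compat a x y : 0 <= a -> 0 <= x <= y -> rpow x a <= rpow y a.
Proof.
  intros Ha Hxy. destruct (Req_dec x 0) as [->|Hx].
  - destruct (Req_dec y 0) as [->|Hy]; [lra|].
    rewrite (rpow_Rpower y) by lra. unfold rpow.
    destruct (Req_EM_T 0 0) as [_|]; [|lra]. destruct (Req_EM_T a 0) as [->|].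
    + rewrite Rpower_O by lra. lra.
    + left. apply exp_pos.
  - rewrite !rpow_Rpower by lra. apply Rle_Rpower_l; lra.
Qed.

Lemma rpow_le_1_plus a t : 0 <= a <= 1 -> 0 <= t -> rpow t a <= 1 + t.
Proof.
  intros Ha Ht. destruct (Req_dec t 0) as [->|Ht0].
  - unfold rpow. destruct (Req_EM_T 0 0) as [_|]; [|lra]. destruct (Req_EM_T a 0); lra.
  - rewrite rpow_Rpower by lra. destruct (Rle_dec t 1).
    + assert (Hle : Rpower t a <= Rpower 1 a) by (apply Rle_Rpower_l; lra).
      unfold Rpower at 2 in Hle. rewrite ln_1, Rmult_0_r, exp_0 in Hle. lra.
    + assert (Hle : Rpower t a <= Rpower t 1) by (apply Rle_Rpower; lra).
      rewrite Rpower_1 in Hle by lra. lra.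
Qed.

(* On [0, D] a beta-Hoelder bound is implied by a Lipschitz bound. *)
Lemma le_Rpower_mul_rpow a t D : 0 <= a <= 1 -> 0 <= t <= D -> 0 < D ->
  t <= Rpower D (1 - a) * rpow t a.
Proof.
  intros Ha Ht HD. destruct (Req_dec t 0) as [->|Ht0].
  - assert (0 <= Rpower D (1 - a)) by (left; apply exp_pos).
    pose proof (rpow_ge0 0 a). nra.
  - rewrite rpow_Rpower by lra.
    assert (Rpower t (1 - a) <= Rpower D (1 - a)) by (apply Rle_Rpower_l; lra).
    assert (Et : t = Rpower t a * Rpower t (1 - a)).
    { rewrite <- Rpower_plus. replace (a + (1 - a)) with 1 by ring.
      rewrite Rpower_1; lra. }
    assert (0 < Rpower t a) by apply exp_pos.
    nra.
Qed.

Lemma mul_rpow a t : 0 <= a -> 0 <= t -> t * rpow t a = rpow t (1 + a).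
Proof.
  intros Ha Ht. destruct (Req_dec t 0) as [->|Ht0].
  - unfold rpow at 2. destruct (Req_EM_T 0 0) as [_|]; [|lra].
    destruct (Req_EM_T (1 + a) 0); [lra|ring].
  - rewrite !rpow_Rpower by lra. rewrite Rpower_plus, Rpower_1 by lra. ring.
Qed.

Lemma MVT_between (F F' : R -> R) x y :
  (forall z, Rmin x y <= z <= Rmax x y -> is_derive F z (F' z)) ->
  exists z, Rmin x y <= z <= Rmax x y /\ F x - F y = F' z * (x - y).
Proof.
  intros HD. rewrite Rmin_comm, Rmax_comm in HD.
  destruct (MVT_gen F y x F') as [z [Hz E]].
  - intros z Hz. apply HD. lra.
  - intros z Hz. apply continuity_pt_filterlim, (ex_derive_continuous F).
    exists (F' z). apply HD. exact Hz.
  - exists z. rewrite Rmin_comm, Rmax_comm. split; [exact Hz|exact E].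
Qed.

Lemma between_in_interval A B x y z : A <= x <= B -> A <= y <= B ->
  Rmin x y <= z <= Rmax x y -> A <= z <= B.
Proof.
  intros Hx Hy Hz. split.
  - apply Rle_trans with (Rmin x y); [apply Rmin_glb|]; lra.
  - apply Rle_trans with (Rmax x y); [|apply Rmax_lub]; lra.
Qed.

Lemma continuous_pos_lower_bound F A B : A <= B ->
  (forall x, A <= x <= B -> continuity_pt F x) ->
  (forall x, A <= x <= B -> 0 < F x) ->
  exists m, 0 < m /\ forall x, A <= x <= B -> m <= F x.
Proof.
  intros HAB Hc Hpos. destruct (continuity_ab_min F A B HAB Hc) as [xm [Hmin Hxm]].
  exists (F xm). split; [apply Hpos|]; assumption.
Qed.

Definition bounded_on (A B : R) (F : R -> R) : Prop :=
  exists M, 0 <= M /\ forall x, A <= x <= B -> Rabs (F x) <= M.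

Definition holder_on (A B beta : R) (F : R -> R) : Prop :=
  exists c, 0 <= c /\ forall x y, A <= x <= B -> A <= y <= B ->
    Rabs (F x - F y) <= c * rpow (Rabs (x - y)) beta.

Lemma Delta4_bounds th x1 x2 x3 :
  Rabs (x1 - th) <= Delta4 th x1 x2 x3 /\ Rabs (x2 + x3 - 2 * x1) <= 2 * Delta4 th x1 x2 x3.
Proof.
  unfold Delta4.
  pose proof (Rmin_l x1 x2). pose proof (Rmin_r x1 x2).
  pose proof (Rmin_l x3 th). pose proof (Rmin_r x3 th).
  pose proof (Rmin_l (Rmin x1 x2) (Rmin x3 th)). pose proof (Rmin_r (Rmin x1 x2) (Rmin x3 th)).
  pose proof (Rmax_l x1 x2). pose proof (Rmax_r x1 x2).
  pose proof (Rmax_l x3 th). pose proof (Rmax_r x3 th).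
  pose proof (Rmax_l (Rmax x1 x2) (Rmax x3 th)). pose proof (Rmax_r (Rmax x1 x2) (Rmax x3 th)).
  split; apply Rabs_le; lra.
Qed.

Lemma Delta4_le_length A B th x1 x2 x3 :
  A <= th <= B -> A <= x1 <= B -> A <= x2 <= B -> A <= x3 <= B ->
  Delta4 th x1 x2 x3 <= B - A.
Proof.
  intros. unfold Delta4.
  assert (Rmax (Rmax x1 x2) (Rmax x3 th) <= B) by (repeat apply Rmax_lub; lra).
  assert (A <= Rmin (Rmin x1 x2) (Rmin x3 th)) by (repeat apply Rmin_glb; lra).
  lra.
Qed.

Section HolderOn.
Context {A B beta : R}.

Lemma derive_bounded_lipschitz (F F' : R -> R) M :
  (forall z, A <= z <= B -> is_derive F z (F' z)) ->
  (forall z, A <= z <= B -> Rabs (F' z) <= M) ->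
  forall x y, A <= x <= B -> A <= y <= B -> Rabs (F x - F y) <= M * Rabs (x - y).
Proof.
  intros HD HM x y Hx Hy.
  destruct (MVT_between F F' x y) as [z [Hz ->]].
  { intros z Hz. apply HD. exact (between_in_interval A B x y z Hx Hy Hz). }
  rewrite Rabs_mult. apply Rmult_le_compat_r; [apply Rabs_pos|].
  apply HM. exact (between_in_interval A B x y z Hx Hy Hz).
Qed.

Lemma holder_on_const k : holder_on A B beta (fun _ => k).
Proof.
  exists 0. split; [lra|]. intros x y _ _.
  rewrite Rminus_diag, Rabs_R0. lra.
Qed.

Lemma holder_on_minus F G :
  holder_on A B beta F -> holder_on A B beta G -> holder_on A B beta (fun x => F x - G x).
Proof.
  intros [c [c0 Hc]] [d [d0 Hd]]. exists (c + d). split; [lra|]. intros x y Hx Hy.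
  replace (F x - G x - (F y - G y)) with ((F x - F y) - (G x - G y)) by ring.
  unfold Rminus at 1; eapply Rle_trans; [apply Rabs_triang|]; rewrite Rabs_Ropp.
  specialize (Hc x y Hx Hy). specialize (Hd x y Hx Hy). lra.
Qed.

Lemma holder_on_inv F m : 0 < m -> (forall x, A <= x <= B -> m <= F x) ->
  holder_on A B beta F -> holder_on A B beta (fun x => / F x).
Proof.
  intros Hm HFm [c [c0 Hc]]. exists (c / (m * m)). split.
  { apply Rdiv_le_0_compat; nra. }
  intros x y Hx Hy.
  pose proof (HFm x Hx). pose proof (HFm y Hy).
  replace (/ F x - / F y) with ((F x - F y) * - / (F x * F y)) by (field; lra).
  rewrite Rabs_mult, Rabs_Ropp, (Rabs_right (/ _)) by (left; apply Rinv_0_lt_compat; nra).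
  replace (c / (m * m) * rpow (Rabs (x - y)) beta)
    with (c * rpow (Rabs (x - y)) beta * / (m * m)) by (unfold Rdiv; ring).
  apply Rmult_le_compat; auto using Rabs_pos.
  - left. apply Rinv_0_lt_compat. nra.
  - apply Rinv_le_contravar; nra.
Qed.

Hypothesis beta_bounds : 0 <= beta <= 1.
Hypothesis A_le_B : A <= B.

Lemma holder_on_of_derive (F F' : R -> R) :
  (forall z, A <= z <= B -> is_derive F z (F' z)) ->
  bounded_on A B F' -> holder_on A B beta F.
Proof.
  intros HD [M [M0 HM]]. exists (M * Rpower (B - A + 1) (1 - beta)). split.
  { apply Rmult_le_pos; [exact M0|left; apply exp_pos]. }
  intros x y Hx Hy.
  eapply Rle_trans; [exact (derive_bounded_lipschitz F F' M HD HM x y Hx Hy)|].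
  rewrite Rmult_assoc. apply Rmult_le_compat_l; [exact M0|].
  apply le_Rpower_mul_rpow; [exact beta_bounds| |lra].
  split; [apply Rabs_pos|]. apply Rabs_le. lra.
Qed.

Lemma holder_on_bounded F : holder_on A B beta F -> bounded_on A B F.
Proof.
  intros [c [c0 Hc]]. exists (Rabs (F A) + c * (1 + (B - A))).
  split; [pose proof (Rabs_pos (F A)); nra|].
  intros x Hx.
  assert (HA : A <= A <= B) by lra.
  assert (Hxa : Rabs (x - A) = x - A) by (apply Rabs_right; lra).
  pose proof (Hc x A Hx HA) as Hdiff. rewrite Hxa in Hdiff.
  pose proof (rpow_le_1_plus beta (x - A) beta_bounds ltac:(lra)).
  assert (Rabs (F x) <= Rabs (F A) + Rabs (F x - F A)).
  { replace (F x) with (F A + (F x - F A)) at 1 by ring. apply Rabs_triang. }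
  assert (c * rpow (x - A) beta <= c * (1 + (B - A))) by (apply Rmult_le_compat_l; lra).
  lra.
Qed.

Lemma holder_on_mult F G :
  holder_on A B beta F -> holder_on A B beta G -> holder_on A B beta (fun x => F x * G x).
Proof.
  intros HF HG.
  destruct (holder_on_bounded F HF) as [MF [MF0 HMF]].
  destruct (holder_on_bounded G HG) as [MG [MG0 HMG]].
  destruct HF as [c [c0 Hc]], HG as [d [d0 Hd]].
  exists (c * MG + MF * d). split; [nra|]. intros x y Hx Hy.
  replace (F x * G x - F y * G y) with ((F x - F y) * G x + F y * (G x - G y)) by ring.
  eapply Rle_trans; [apply Rabs_triang|]. rewrite !Rabs_mult.
  pose proof (Hc x y Hx Hy). pose proof (Hd x y Hx Hy).
  pose proof (HMG x Hx). pose proof (HMF y Hy).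
  set (r := rpow (Rabs (x - y)) beta) in *.
  assert (Rabs (F x - F y) * Rabs (G x) <= c * r * MG)
    by (apply Rmult_le_compat; auto using Rabs_pos).
  assert (Rabs (F y) * Rabs (G x - G y) <= MF * (d * r))
    by (apply Rmult_le_compat; auto using Rabs_pos).
  nra.
Qed.

Lemma holder_derive_taylor (g h : R -> R) c x y :
  0 <= c -> A <= x <= B -> A <= y <= B ->
  (forall z, A <= z <= B -> is_derive g z (h z)) ->
  (forall u v, A <= u <= B -> A <= v <= B -> Rabs (h u - h v) <= c * rpow (Rabs (u - v)) beta) ->
  Rabs (g x - g y + h x * (y - x)) <= c * rpow (Rabs (y - x)) (1 + beta).
Proof.
  intros c0 Hx Hy HD Hh.
  destruct (MVT_between g h y x) as [z [Hz E]].
  { intros z Hz. apply HD. exact (between_in_interval A B y x z Hy Hx Hz). }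
  replace (g x - g y + h x * (y - x)) with ((h x - h z) * (y - x)) by lra.
  rewrite Rabs_mult, <- mul_rpow by (lra || apply Rabs_pos).
  assert (Hxz : rpow (Rabs (x - z)) beta <= rpow (Rabs (y - x)) beta).
  { apply rpow_le_compat; [lra|]. split; [apply Rabs_pos|].
    rewrite Rabs_minus_sym. apply Rabs_le_between_min_max. exact Hz. }
  pose proof (Hh x z Hx (between_in_interval A B y x z Hy Hx Hz)).
  rewrite (Rmult_comm (Rabs (y - x))), <- Rmult_assoc.
  apply Rmult_le_compat_r; [apply Rabs_pos|].
  apply Rle_trans with (c * rpow (Rabs (x - z)) beta); [assumption|].
  apply Rmult_le_compat_l; assumption.
Qed.

Lemma three_point_estimate (g h : R -> R) c Mh Mg th x1 x2 x3 :
  0 <= c -> 0 <= Mh -> 0 <= Mg ->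
  (forall z, A <= z <= B -> is_derive g z (h z)) ->
  (forall u v, A <= u <= B -> A <= v <= B -> Rabs (h u - h v) <= c * rpow (Rabs (u - v)) beta) ->
  (forall z, A <= z <= B -> Rabs (h z) <= Mh) ->
  (forall z, A <= z <= B -> Rabs (g z) <= Mg) ->
  A <= th <= B -> A <= x1 <= B -> A <= x2 <= B -> A <= x3 <= B ->
  Rabs ((g th - g x1 + h th * (x1 - th))
        + 1 / 3 * ((h th - h x1) * (x2 + x3 - 2 * x1))
        + 1 / 3 * ((g x1 - g th) * (g x1 + g th) * (x2 + x3 - 2 * x1)))
  <= (5 / 3 * c + 4 / 3 * Mh * Mg * Rpower (B - A + 1) (1 - beta))
     * rpow (Delta4 th x1 x2 x3) (1 + beta).
Proof.
  intros c0 Mh0 Mg0 Hg' Hh HMh HMg Hth H1 H2 H3.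
  destruct (Delta4_bounds th x1 x2 x3) as [Hx1 Hx23].
  pose proof (Delta4_le_length A B th x1 x2 x3 Hth H1 H2 H3) as HDle.
  set (D := Delta4 th x1 x2 x3) in *.
  set (r := rpow D beta).
  set (k := Rpower (B - A + 1) (1 - beta)).
  assert (HD0 : 0 <= D) by (pose proof (Rabs_pos (x1 - th)); lra).
  assert (Er : rpow D (1 + beta) = D * r) by (symmetry; apply mul_rpow; lra).
  assert (Hr0 : 0 <= r) by apply rpow_ge0.
  assert (HDr : D <= k * r) by (apply le_Rpower_mul_rpow; lra).
  assert (T1 : Rabs (g th - g x1 + h th * (x1 - th)) <= c * (D * r)).
  { rewrite <- Er. eapply Rle_trans; [exact (holder_derive_taylor g h c th x1 c0 Hth H1 Hg' Hh)|].
    apply Rmult_le_compat_l; [exact c0|]. apply rpow_le_compat; [lra|].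
    split; [apply Rabs_pos|exact Hx1]. }
  assert (T2 : Rabs ((h th - h x1) * (x2 + x3 - 2 * x1)) <= c * r * (2 * D)).
  { rewrite Rabs_mult. apply Rmult_le_compat; try apply Rabs_pos; [|exact Hx23].
    eapply Rle_trans; [exact (Hh th x1 Hth H1)|].
    apply Rmult_le_compat_l; [exact c0|]. apply rpow_le_compat; [lra|].
    split; [apply Rabs_pos|]. rewrite Rabs_minus_sym. exact Hx1. }
  assert (T3 : Rabs ((g x1 - g th) * (g x1 + g th) * (x2 + x3 - 2 * x1))
               <= Mh * D * (2 * Mg) * (2 * D)).
  { rewrite !Rabs_mult.
    apply Rmult_le_compat; try apply Rabs_pos; try apply Rmult_le_pos; try apply Rabs_pos;
      [apply Rmult_le_compat; try apply Rabs_pos| exact Hx23].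
    - eapply Rle_trans; [exact (derive_bounded_lipschitz g h Mh Hg' HMh x1 th H1 Hth)|].
      apply Rmult_le_compat_l; assumption.
    - eapply Rle_trans; [apply Rabs_triang|].
      pose proof (HMg x1 H1). pose proof (HMg th Hth). lra. }
  rewrite Er.
  eapply Rle_trans; [apply Rabs_triang|].
  eapply Rle_trans; [apply Rplus_le_compat_r, Rabs_triang|].
  rewrite !(Rabs_mult (1 / 3)), (Rabs_right (1 / 3)) by lra.
  assert (Mh * D * (2 * Mg) * (2 * D) <= 4 * (Mh * Mg) * D * (k * r)).
  { replace (Mh * D * (2 * Mg) * (2 * D)) with (4 * (Mh * Mg) * D * D) by ring.
    apply Rmult_le_compat_l; [|exact HDr]. apply Rmult_le_pos; [|exact HD0]. nra. }
  nra.
Qed.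

End HolderOn.

Definition half_nonlinearity (f : R -> R) (x : R) : R :=
  Derive_n f 2 x / (2 * Derive_n f 1 x).

Definition half_nonlinearity' (f : R -> R) (x : R) : R :=
  Derive_n f 3 x / (2 * Derive_n f 1 x) - 2 * half_nonlinearity f x ^ 2.

Lemma is_derive_half_nonlinearity f x :
  ex_derive_n f 2 x -> ex_derive_n f 3 x -> Derive_n f 1 x <> 0 ->
  is_derive (half_nonlinearity f) x (half_nonlinearity' f x).
Proof.
  intros H2 H3 Hf1.
  pose proof (is_derive_div (Derive_n f 2) (fun t => 2 * Derive_n f 1 t) x _ _
    (Derive_correct _ _ H3) (is_derive_scal _ _ 2 _ (Derive_correct _ _ H2))) as HD.
  replace (half_nonlinearity' f x) with
    ((Derive_n f 3 x * (2 * Derive_n f 1 x) - Derive_n f 2 x * (2 * Derive_n f 2 x))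
     / (2 * Derive_n f 1 x) ^ 2).
  - apply HD. lra.
  - unfold half_nonlinearity', half_nonlinearity. field. exact Hf1.
Qed.

Lemma expansion_decomposition f th x1 x2 x3 :
  Derive_n f 1 th <> 0 -> Derive_n f 1 x1 <> 0 ->
  let g := half_nonlinearity f in
  let h := half_nonlinearity' f in
  Derive_n f 2 th / (2 * Derive_n f 1 th)
  + Derive_n f 3 th / (6 * Derive_n f 1 th) * (x1 + x2 + x3 - 3 * th)
  - (Derive_n f 2 th / (2 * Derive_n f 1 th)) ^ 2 * (x2 + x3 - 2 * th)
  - Derive_n f 2 x1 / (2 * Derive_n f 1 x1)
  - 1 / 6 * Schwarzian f x1 * (x2 + x3 - 2 * x1)
  = (g th - g x1 + h th * (x1 - th))
    + 1 / 3 * ((h th - h x1) * (x2 + x3 - 2 * x1))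
    + 1 / 3 * ((g x1 - g th) * (g x1 + g th) * (x2 + x3 - 2 * x1)).
Proof.
  intros Hth Hx1 g h. unfold g, h, half_nonlinearity', half_nonlinearity, Schwarzian.
  field. split; assumption.
Qed.

Section C3beta.
Variables (A B beta : R) (f : R -> R).
Hypothesis beta_bounds : 0 <= beta <= 1.
Hypothesis A_le_B : A <= B.
Hypothesis f_C3beta : C3beta f A B beta.
Hypothesis f'_pos : forall x, A <= x <= B -> 0 < Derive_n f 1 x.

Lemma is_derive_Derive_n_on n : (n < 3)%nat -> forall x, A <= x <= B ->
  is_derive (Derive_n f n) x (Derive_n f (S n) x).
Proof.
  intros Hn x Hx. destruct f_C3beta as [Hder _]. destruct (Hder x Hx) as [H1 [H2 H3]].
  apply Derive_correct.
  destruct n as [|[|[|n]]]; [exact H1|exact H2|exact H3|lia].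
Qed.

Lemma holder_on_half_nonlinearity' : holder_on A B beta (half_nonlinearity' f).
Proof.
  destruct f_C3beta as [_ [K HK]].
  assert (Hf3 : holder_on A B beta (Derive_n f 3)).
  { exists (Rabs K). split; [apply Rabs_pos|]. intros x y Hx Hy.
    eapply Rle_trans; [exact (HK x y Hx Hy)|].
    apply Rmult_le_compat_r; [apply rpow_ge0|apply Rle_abs]. }
  assert (Hf2 : holder_on A B beta (Derive_n f 2)).
  { apply (holder_on_of_derive beta_bounds A_le_B _ (Derive_n f 3)).
    - apply is_derive_Derive_n_on. lia.
    - exact (holder_on_bounded beta_bounds A_le_B _ Hf3). }
  assert (Hf1 : holder_on A B beta (Derive_n f 1)).
  { apply (holder_on_of_derive beta_bounds A_le_B _ (Derive_n f 2)).
    - apply is_derive_Derive_n_on. lia.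
    - exact (holder_on_bounded beta_bounds A_le_B _ Hf2). }
  destruct (continuous_pos_lower_bound (Derive_n f 1) A B A_le_B) as [m [Hm Hmf1]].
  { intros x Hx. apply continuity_pt_filterlim, (ex_derive_continuous (Derive_n f 1)).
    exists (Derive_n f 2 x). apply is_derive_Derive_n_on; [lia|exact Hx]. }
  { exact f'_pos. }
  assert (Hinv : holder_on A B beta (fun x => / (2 * Derive_n f 1 x))).
  { apply (holder_on_inv (fun x => 2 * Derive_n f 1 x) (2 * m)); [lra| |].
    - intros x Hx. specialize (Hmf1 x Hx). lra.
    - apply (holder_on_mult beta_bounds A_le_B); [apply holder_on_const|exact Hf1]. }
  assert (Hg : holder_on A B beta (half_nonlinearity f))
    by (apply (holder_on_mult beta_bounds A_le_B); assumption).
  unfold half_nonlinearity'.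
  apply holder_on_minus; [apply (holder_on_mult beta_bounds A_le_B); assumption|].
  apply (holder_on_mult beta_bounds A_le_B); [apply holder_on_const|].
  apply (holder_on_mult beta_bounds A_le_B); [exact Hg|].
  apply (holder_on_mult beta_bounds A_le_B); [exact Hg|apply holder_on_const].
Qed.

End C3beta.

Theorem lemma1 (beta A B : R) (f : R -> R) :
  0 <= beta <= 1 ->
  C3beta f A B beta ->
  (forall x, A <= x <= B -> 0 < Derive_n f 1 x) ->
  exists C : R, forall th x1 x2 x3 : R,
    A <= th <= B -> A <= x1 <= B -> A <= x2 <= B -> A <= x3 <= B ->
    Rabs ( Derive_n f 2 th / (2 * Derive_n f 1 th)
         + Derive_n f 3 th / (6 * Derive_n f 1 th) * (x1 + x2 + x3 - 3 * th)
         - (Derive_n f 2 th / (2 * Derive_n f 1 th)) ^ 2 * (x2 + x3 - 2 * th)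
         - Derive_n f 2 x1 / (2 * Derive_n f 1 x1)
         - 1 / 6 * Schwarzian f x1 * (x2 + x3 - 2 * x1) )
    <= C * rpow (Delta4 th x1 x2 x3) (1 + beta).
Proof.
  intros Hbeta Hf Hf1.
  destruct (Rle_dec A B) as [HAB|HAB]; [|exists 0; intros; lra].
  set (g := half_nonlinearity f). set (h := half_nonlinearity' f).
  assert (Hg' : forall z, A <= z <= B -> is_derive g z (h z)).
  { intros z Hz. destruct Hf as [Hder _]. destruct (Hder z Hz) as [_ [H2 H3]].
    apply is_derive_half_nonlinearity; [exact H2|exact H3|]. specialize (Hf1 z Hz). lra. }
  pose proof (holder_on_half_nonlinearity' A B beta f Hbeta HAB Hf Hf1) as Hh.
  destruct (holder_on_bounded Hbeta HAB h Hh) as [Mh [Mh0 HMh]].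
  destruct (holder_on_bounded Hbeta HAB g
              (holder_on_of_derive Hbeta HAB g h Hg' (ex_intro _ Mh (conj Mh0 HMh))))
    as [Mg [Mg0 HMg]].
  destruct Hh as [c [c0 Hc]].
  exists (5 / 3 * c + 4 / 3 * Mh * Mg * Rpower (B - A + 1) (1 - beta)).
  intros th x1 x2 x3 Hth H1 H2 H3.
  rewrite expansion_decomposition by (apply Rgt_not_eq, Hf1; assumption).
  exact (three_point_estimate Hbeta HAB g h c Mh Mg th x1 x2 x3
           c0 Mh0 Mg0 Hg' Hc HMh HMg Hth H1 H2 H3).
Qed.
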